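(* Let $Q=(q_1,\dots,q_n)$ with $q_i\in\mathbb C\setminus\{0,1\}$, and let $\Lambda=(\lambda_{ij})$ be an $n\times n$ matrix over $\mathbb C\setminus\{0\}$ with $\lambda_{ii}=1$, $\lambda_{ij}=\lambda_{ji}^{-1}$. Let $G(Q,\Lambda)$ be the multiplicative subgroup of $\mathbb C^\times$ generated by all $q_i$ and $\lambda_{ij}$, and assume it is torsion free, hence free abelian of finite rank $r$. Fix a basis $\eta_1,\dots,\eta_r$ of $G(Q,\Lambda)$, a $\mathbb Q$-linearly independent subset $\{\mu_1,\dots,\mu_r\}$ of $\mathbb C$, and $q\in\mathbb C\setminus\{0,1\}$ not a root of unity. For each $i$ let $e_i\in\mathbb C[t]$ be the unique polynomial of degree at most $2$ with $e_i(q)=\eta_i$, $e_i(1)=1$, $e_i'(1)=\mu_i$. Let $\mathbf K$ be the set of $\lambda\in\mathbb C\setminus\{0,1\}$ such that $e_i(\lambda)\ne0$ for all $i$ and the multiplicative subgroup $\langle e_1(\lambda),\dots,e_r(\lambda)\rangle$ of $\mathbb C^\times$ is free abelian with basis $e_1(\lambda),\dots,e_r(\lambda)$. Then $\mathbf K$ is an infinite subset of $\mathbb C\setminus\{0,1\}$ and $q\in\mathbf K$.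
   Context: $e_i'$ denotes the formal derivative of $e_i$. *)

From HB Require Import structures.
From mathcomp Require Import all_boot all_order all_algebra.
From mathcomp Require Import classical_sets cardinality reals.
From mathcomp Require Import complex.
Set Implicit Arguments. Unset Strict Implicit. Unset Printing Implicit Defensive.
Import Order.TTheory GRing.Theory Num.Theory.
Local Open Scope ring_scope.

Definition in_mgen (C : unitRingType) (I : finType) (g : I -> C) (x : C) : Prop :=
  exists z : I -> int, x = \prod_(i : I) g i ^ z i.

Definition mfree_basis (C : unitRingType) (r : nat) (v : 'I_r -> C) : Prop :=
  forall z : 'I_r -> int, \prod_(k < r) v k ^ z k = 1 -> forall k, z k = 0.

Definition QL_gen (C : Type) (n : nat) (Q : 'I_n -> C) (L : 'M[C]_n)
  (a : 'I_n + ('I_n * 'I_n)) : C :=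
  match a with inl i => Q i | inr ij => L ij.1 ij.2 end.

From HB Require Import structures.
From mathcomp Require Import all_boot all_order all_algebra.
From mathcomp Require Import classical_sets cardinality reals.
From mathcomp Require Import complex.
From mathcomp Require Import boolp constructive_ereal measure lebesgue_measure.
Set Implicit Arguments. Unset Strict Implicit. Unset Printing Implicit Defensive.
Import Order.TTheory GRing.Theory Num.Theory.
Local Open Scope ring_scope.
Local Open Scope classical_set_scope.

(** A point [lam] outside [K] is [0], [1], a root of some [e_k], or satisfies
    a nontrivial relation [prod_k e_k(lam)^(z_k) = 1], i.e. is a root of
    [prod_k e_k^(z_k^+) - prod_k e_k^(z_k^-)].  The derivative of the latter
    polynomial at [1] is [sum_k z_k mu_k], which is nonzero by the
    [Q]-independence of the [mu_k]; so each of these countably many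
    polynomials has finitely many roots.  Hence the complement of [K] is
    countable, whereas [C] is not.  Finally [q] lies in [K] because
    [e_k(q) = eta_k] and the [eta_k] form a basis. *)

Lemma realType_uncountable (R : realType) : ~ countable [set: R].
Proof.
move=> cR.
have := countable_lebesgue_measure0 (sub_countable (subset_card_le (@subsetT _ `[0%R, 1%R])) cR).
rewrite lebesgue_measure_itv /= lte_fin ltr01 oppr0 adde0 => /eqP.
by rewrite eqe oner_eq0.
Qed.

Lemma complex_uncountable (R : realType) : ~ countable [set: R[i]].
Proof.
move=> /countable_injP [f f_inj]; apply: (@realType_uncountable R).
apply/countable_injP; exists (fun x => f x%:C%C) => x y _ _ /f_inj.
by move=> /(_ (in_setT _) (in_setT _)) [].
Qed.

Lemma countableU T (A B : set T) : countable A -> countable B -> countable (A `|` B).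
Proof.
move=> cA cB.
have -> : A `|` B = \bigcup_(b in [set: bool]) (if b then A else B).
  apply/seteqP; split=> x; first by case=> Ax; [exists true | exists false].
  by case=> -[] _ ?; [left | right].
by apply: bigcup_countable => // -[].
Qed.

Lemma countable_fun (I : finType) (T : countType) (D : set (I -> T)) : countable D.
Proof.
apply/countable_injP; exists (fun f => pickle (finfun f)) => f g _ _.
move=> /(pcan_inj pickleK) fg; apply/funext => i.
by move/(congr1 (fun h : {ffun I -> T} => h i)): fg; rewrite !ffunE.
Qed.

Lemma infinite_set_countable_setC T (A : set T) :
  ~ countable [set: T] -> countable (~` A) -> infinite_set A.
Proof.
move=> ncT cAC /finite_set_countable cA; apply: ncT.
by rewrite -(setUv A); apply: countableU.
Qed.

Lemma finite_set_roots (F : idomainType) (p : {poly F}) :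
  p != 0 -> finite_set [set x | root p x].
Proof.
move=> p0; apply: contrapT => /(infinite_set_fset (size p)) [B BA leB].
have /max_poly_roots : all (root p) (finmap.enum_fset B).
  by apply/allP => x xB; exact: BA.
by move=> /(_ p0 (finmap.fset_uniq B)); rewrite ltnNge leB.
Qed.

Definition intpos (z : int) : nat := if z is Posz n then n else 0.
Definition intneg (z : int) : nat := if z is Negz n then n.+1 else 0.

Lemma expfz_posneg (F : fieldType) (x : F) z : x ^ z = x ^+ intpos z / x ^+ intneg z.
Proof.
case: z => n /=; first by rewrite expr0 invr1 mulr1.
by rewrite NegzE -exprnN mul1r.
Qed.

Lemma intr_posneg (R : pzRingType) z : z%:~R = (intpos z)%:R - (intneg z)%:R :> R.
Proof. by case: z => n /=; rewrite ?subr0 // NegzE mulrNz sub0r. Qed.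

Lemma prodfz_eq1 (F : fieldType) (I : finType) (x : I -> F) (z : I -> int) :
  (forall i, x i != 0) -> \prod_i x i ^ z i = 1 ->
  \prod_i x i ^+ intpos (z i) = \prod_i x i ^+ intneg (z i).
Proof.
move=> x_neq0; under eq_bigr do rewrite expfz_posneg.
rewrite prodf_div => /(congr1 (fun t => t * \prod_i x i ^+ intneg (z i))).
by rewrite divfK ?mul1r //; apply/prodf_neq0 => i _; rewrite expf_neq0.
Qed.

Lemma horner_deriv_prod_expn (R : comNzRingType) (I : finType) (f : I -> {poly R})
    (a : I -> nat) (c : R) :
  (forall i, (f i).[c] = 1) ->
  (\prod_i f i ^+ a i).[c] = 1 /\
  (\prod_i f i ^+ a i)^`().[c] = \sum_i (a i)%:R * (f i)^`().[c].
Proof.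
move=> fc1; apply: (big_rec2 (fun p s => p.[c] = 1 /\ p^`().[c] = s)).
  by rewrite hornerC derivC hornerC.
move=> i p s _ [pc1 p'c]; split.
  by rewrite hornerM horner_exp fc1 expr1n pc1 mulr1.
rewrite derivM deriv_exp !hornerE /= hornerMn hornerM horner_exp fc1 pc1 p'c.
by rewrite !expr1n !mulr1 mul1r -mulr_natl.
Qed.

Lemma not_mfree_basis (C : unitRingType) (r : nat) (v : 'I_r -> C) :
  ~ mfree_basis v -> exists2 z : 'I_r -> int, exists k, z k != 0 &
    \prod_(k < r) v k ^ z k = 1.
Proof.
move=> /existsNP [z /not_implyP [vz1 /existsNP [k /eqP zk]]].
by exists z => //; exists k.
Qed.

Section RelationPolynomials.
Variables (F : fieldType) (r : nat) (e : 'I_r -> {poly F}) (mu : 'I_r -> F).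

Definition relation_poly (z : 'I_r -> int) : {poly F} :=
  \prod_k e k ^+ intpos (z k) - \prod_k e k ^+ intneg (z k).

Definition free_locus : set F := [set lam | lam != 0 /\ lam != 1 /\
  (forall k, (e k).[lam] != 0) /\ mfree_basis (fun k => (e k).[lam])].

Lemma root_relation_poly (x : F) (z : 'I_r -> int) :
  (forall k, (e k).[x] != 0) -> \prod_k (e k).[x] ^ z k = 1 ->
  root (relation_poly z) x.
Proof.
move=> ex_neq0 /(prodfz_eq1 ex_neq0) ex_rel.
rewrite /root /relation_poly hornerD hornerN !horner_prod.
under eq_bigr do rewrite horner_exp.
under [X in _ - X]eq_bigr do rewrite horner_exp.
by rewrite ex_rel subrr.
Qed.

Hypothesis e_at1 : forall k, (e k).[1] = 1.
Hypothesis e'_at1 : forall k, (e k)^`().[1] = mu k.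
Hypothesis mu_free :
  forall c : 'I_r -> rat, \sum_k ratr (c k) * mu k = 0 -> forall k, c k = 0.

Lemma deriv_relation_poly1 (z : 'I_r -> int) :
  (relation_poly z)^`().[1] = \sum_k (z k)%:~R * mu k.
Proof.
rewrite derivB hornerD hornerN.
rewrite !(horner_deriv_prod_expn _ e_at1).2 -sumrB.
by apply: eq_bigr => k _; rewrite e'_at1 intr_posneg mulrBl.
Qed.

Lemma relation_poly_neq0 (z : 'I_r -> int) :
  (exists k, z k != 0) -> relation_poly z != 0.
Proof.
move=> [k zk]; apply: contraNneq zk => rel0.
rewrite -(intr_eq0 rat) (mu_free (c := fun k => (z k)%:~R)) //.
under eq_bigr do rewrite ratr_int.
by rewrite -deriv_relation_poly1 rel0 deriv0 horner0.
Qed.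

Lemma setC_free_locus_sub :
  ~` free_locus `<=` [set 0] `|` [set 1] `|`
    \bigcup_(k in [set: 'I_r]) [set x | root (e k) x] `|`
    \bigcup_(z in [set z | exists k, z k != 0]) [set x | root (relation_poly z) x].
Proof.
move=> x /not_andP [/negP/negPn/eqP -> | /not_andP [/negP/negPn/eqP -> | /not_andP]].
- by left; left; left.
- by left; left; right.
case=> [/existsNP [k /negP/negPn ek] | /not_mfree_basis [z nz_z exz]].
  by left; right; exists k.
have [[k ek] | ex_neq0] := pselect (exists k, root (e k) x).
  by left; right; exists k.
right; exists z => //; apply: root_relation_poly => // k.
by apply/negP => ek; apply: ex_neq0; exists k.
Qed.

Lemma countable_setC_free_locus : countable (~` free_locus).
Proof.
have e_neq0 k : e k != 0.
  by apply: contra_eq_neq (e_at1 k) => ->; rewrite horner0 eq_sym oner_neq0.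
apply: sub_countable (subset_card_le setC_free_locus_sub) _.
repeat apply: countableU; rewrite ?countable1 //.
- by apply: bigcup_countable => // k _; exact/finite_set_countable/finite_set_roots.
- apply: bigcup_countable => [|z nz_z]; first exact: countable_fun.
  exact/finite_set_countable/finite_set_roots/relation_poly_neq0.
Qed.

End RelationPolynomials.

Theorem lemma2p5 (R : realType) (n : nat) (Q : 'I_n -> R[i]) (L : 'M[R[i]]_n)
  (r : nat) (eta : 'I_r -> R[i]) (mu : 'I_r -> R[i]) (q : R[i])
  (e : 'I_r -> {poly R[i]}) :
  (forall i, Q i != 0 /\ Q i != 1) ->
  (forall i j, L i j != 0) ->
  (forall i, L i i = 1) ->
  (forall i j, L i j = (L j i)^-1) ->
  (* G(Q,Lambda) is torsion free *)
  (forall x, in_mgen (QL_gen Q L) x -> forall m : nat, (0 < m)%N -> x ^+ m = 1 -> x = 1) ->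
  (* eta_1..eta_r is a basis of G(Q,Lambda) *)
  (forall k, in_mgen (QL_gen Q L) (eta k)) ->
  (forall x, in_mgen (QL_gen Q L) x -> in_mgen eta x) ->
  mfree_basis eta ->
  (* mu_1..mu_r are Q-linearly independent *)
  (forall c : 'I_r -> rat, \sum_(k < r) ratr (c k) * mu k = 0 -> forall k, c k = 0) ->
  q != 0 -> q != 1 -> (forall m : nat, (0 < m)%N -> q ^+ m != 1) ->
  (* e_i is the polynomial of degree <= 2 with the prescribed data *)
  (forall k, (size (e k) <= 3)%N /\ (e k).[q] = eta k /\ (e k).[1] = 1
             /\ (e k)^`().[1] = mu k) ->
  let K : set R[i] := (fun lam : R[i] => lam != 0 /\ lam != 1 /\
            (forall k, (e k).[lam] != 0) /\ mfree_basis (fun k => (e k).[lam])) in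
  infinite_set K /\ K q.
Proof.
move=> Q_neq0 L_neq0 _ _ _ eta_in_G _ eta_free mu_free q_neq0 q_neq1 _ e_data K.
have e_q k : (e k).[q] = eta k by have [_ []] := e_data k.
have e_at1 k : (e k).[1] = 1 by have [_ [_ []]] := e_data k.
have e'_at1 k : (e k)^`().[1] = mu k by have [_ [_ []]] := e_data k.
have eta_neq0 k : eta k != 0.
  have [z ->] := eta_in_G k; apply/prodf_neq0 => -[j | [j j']] _; apply: expfz_neq0.
    exact: (Q_neq0 j).1.
  exact: L_neq0.
split.
  apply: infinite_set_countable_setC (@complex_uncountable R) _.
  exact: (countable_setC_free_locus e_at1 e'_at1 mu_free).
do 3 (split=> //); first by move=> k; rewrite e_q.
by under eq_fun do rewrite e_q.
Qed.
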